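(* Let $d \ge 1$ and let $N_0, \ldots, N_{d-1}$ be positive integers (the extents of the dimensions of an iteration space, ordered by a fixed loop order). For each $m \in \{0,\ldots,d-1\}$ and each prefix $\bar{x}_m = (x_0,\ldots,x_{m-1})$ with $x_k \in \{0,\ldots,N_k-1\}$, let $\mathbf{C}_m(\,\cdot \mid \bar{x}_m) : \{0,1,\ldots,N_m\} \to \mathbb{R}_{\ge 0}$ be a cost function satisfying: (i) $\mathbf{C}_m(0 \mid \bar{x}_m) = 0$; (ii) (monotonicity) $\mathbf{C}_m(x \mid \bar{x}_m) \le \mathbf{C}_m(x+1 \mid \bar{x}_m)$ for all $0 \le x < N_m$; (iii) (hierarchical consistency) for every $m < d-1$ and every $x_m \in \{0,\ldots,N_m-1\}$, $\mathbf{C}_m(x_m+1 \mid \bar{x}_m) = \mathbf{C}_m(x_m \mid \bar{x}_m) + \mathbf{C}_{m+1}(N_{m+1} \mid \bar{x}_m, x_m)$. Define $\Delta_{d-1} = \max\big(\mathbf{C}_{d-1}(x+1 \mid \bar{x}_{d-1}) - \mathbf{C}_{d-1}(x \mid \bar{x}_{d-1})\big)$, the maximum taken over all prefixes $\bar{x}_{d-1}$ and all $0 \le x < N_{d-1}$. Let $\mathcal{Q}$ be a query cost with $0 \le \mathcal{Q} < \mathbf{C}_0(N_0)$, and let $\bar{x} = (x_0,\ldots,x_{d-1})$ be the output of the following procedure: set $\mathcal{R}_0 = \mathcal{Q}$; for $m = 0,1,\ldots,d-1$ in order, let $x_m$ be the largest $x \in \{0,\ldots,N_m-1\}$ with $\mathbf{C}_m(x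 \mid x_0,\ldots,x_{m-1}) \le \mathcal{R}_m$, and set $\mathcal{R}_{m+1} = \mathcal{R}_m - \mathbf{C}_m(x_m \mid x_0,\ldots,x_{m-1})$. Then, writing $\mathbf{C}(\bar{x}) = \sum_{m=0}^{d-1} \mathbf{C}_m(x_m \mid x_0,\ldots,x_{m-1})$, we have $0 \le \mathcal{Q} - \mathbf{C}(\bar{x}) < \Delta_{d-1}$.
   Context: $\mathbf{C}_m(x \mid x_0,\ldots,x_{m-1})$ models the cost of coiterating, in lexicographic order of the $d$-dimensional iteration space, from coordinate $(x_0,\ldots,x_{m-1},0,\ldots,0)$ up to (but excluding) coordinate $(x_0,\ldots,x_{m-1},x,0,\ldots,0)$; i.e. the cost of the subspace with the first $m$ coordinates fixed, the $m$-th coordinate in $[0,x)$, and all later coordinates ranging over their full extents. $\mathbf{C}(\bar{x})$ is then the total cost of coiteration from $(0,\ldots,0)$ to $\bar{x}$. The procedure in the claim is the ''hierarchical search partitioning'' algorithm, a per-dimension binary search for a coordinate whose prefix cost is at most the remaining query cost. *)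

From mathcomp Require Import all_boot all_order all_algebra.
From mathcomp Require Import reals.
Set Implicit Arguments. Unset Strict Implicit. Unset Printing Implicit Defensive.
Import Order.TTheory GRing.Theory Num.Theory.
Local Open Scope ring_scope.

(* Extents: N : nat -> nat (only N 0, ..., N (d-1) matter).
   A prefix (x_0,...,x_{m-1}) is a seq nat of size m.
   Cost functions: C m p x  =  C_m(x | p). *)

Definition valid_prefix (N : nat -> nat) (p : seq nat) : Prop :=
  forall k, (k < size p)%N -> (nth 0%N p k < N k)%N.

Fixpoint prefixes (N : nat -> nat) (m : nat) : seq (seq nat) :=
  match m with
  | 0 => [:: [::]]
  | m'.+1 => [seq rcons p x | p <- prefixes N m', x <- iota 0 (N m')]
  end.

(* Largest x in {0,...,n-1} with f x <= r (0 if none). *)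
Fixpoint lastle {R : realType} (f : nat -> R) (n : nat) (r : R) : nat :=
  match n with
  | 0 => 0%N
  | n'.+1 => if f n' <= r then n' else lastle f n' r
  end.

(* Hierarchical search partitioning: state after k steps = (x_0..x_{k-1}, R_k). *)
Fixpoint hsp_state {R : realType} (N : nat -> nat)
    (C : nat -> seq nat -> nat -> R) (Q : R) (k : nat) : seq nat * R :=
  match k with
  | 0 => ([::], Q)
  | k'.+1 =>
      let (p, r) := hsp_state N C Q k' in
      let x := lastle (C k' p) (N k') r in
      (rcons p x, r - C k' p x)
  end.

Definition hsp {R : realType} N (C : nat -> seq nat -> nat -> R) Q d : seq nat :=
  (hsp_state N C Q d).1.

Definition total_cost {R : realType} (C : nat -> seq nat -> nat -> R)
    (d : nat) (xs : seq nat) : R :=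
  \sum_(m < d) C m (take m xs) (nth 0%N xs m).

Definition Delta_last {R : realType} (N : nat -> nat)
    (C : nat -> seq nat -> nat -> R) (d : nat) : R :=
  \big[Num.max/0]_(p <- prefixes N d.-1)
    \big[Num.max/0]_(x <- iota 0 (N d.-1))
      (C d.-1 p x.+1 - C d.-1 p x).

From mathcomp Require Import all_boot all_order all_algebra.
From mathcomp Require Import reals.
From mathcomp Require Import lra.
Set Implicit Arguments. Unset Strict Implicit. Unset Printing Implicit Defensive.
Import Order.TTheory GRing.Theory Num.Theory.
Local Open Scope ring_scope.

(* The remainder R_k and the prefix cost telescope: Q - R_k is always the cost
   of the digits chosen so far.  As long as 0 <= R_k < C_k(N_k | prefix), the
   search at level k finds a digit x_k with C_k(x_k) <= R_k < C_k(x_k + 1), so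
   0 <= R_(k+1) < C_k(x_k + 1) - C_k(x_k); by hierarchical consistency this gap
   is C_(k+1)(N_(k+1) | prefix, x_k), which propagates the invariant.  At the
   last level the gap is one of the increments over which Delta_(d-1) is the
   maximum. *)

Lemma lastleP (R : realType) (f : nat -> R) (n : nat) (r : R) :
  f 0%N <= r -> r < f n ->
  [/\ (lastle f n r < n)%N, f (lastle f n r) <= r & r < f (lastle f n r).+1].
Proof.
move=> f0_le; elim: n => [|n IHn] /= lt_r_fn.
  by have := lt_le_trans lt_r_fn f0_le; rewrite ltxx.
case: ifP => [// | fn_gt]; have /IHn[lt_n ? ?] : r < f n by rewrite ltNge fn_gt.
by split => //; apply: ltnW.
Qed.

Lemma valid_prefix_rcons N p x :
  valid_prefix N p -> (x < N (size p))%N -> valid_prefix N (rcons p x).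
Proof.
move=> valid_p lt_x k; rewrite size_rcons ltnS nth_rcons leq_eqVlt.
by case/orP=> [/eqP->|lt_k]; [rewrite ltnn eqxx | rewrite lt_k; apply: valid_p].
Qed.

Lemma mem_prefixes N p : valid_prefix N p -> p \in prefixes N (size p).
Proof.
elim/last_ind: p => [|p x IHp] valid_px; first by rewrite inE.
have lt_nth k : (k <= size p)%N -> (nth 0%N (rcons p x) k < N k)%N.
  by move=> le_k; apply: valid_px; rewrite size_rcons ltnS.
rewrite size_rcons; apply: (allpairs_f (fun p x => rcons p x)).
  by apply: IHp => k lt_k; have := lt_nth k (ltnW lt_k); rewrite nth_rcons lt_k.
by have := lt_nth _ (leqnn _); rewrite nth_rcons ltnn eqxx mem_iota.
Qed.

Lemma le_Delta_last (R : realType) N (C : nat -> seq nat -> nat -> R) d p x :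
  valid_prefix N p -> size p = d.-1 -> (x < N d.-1)%N ->
  C d.-1 p x.+1 - C d.-1 p x <= Delta_last N C d.
Proof.
move=> valid_p size_p lt_x; have p_in := mem_prefixes valid_p; rewrite size_p in p_in.
pose gaps q := \big[Num.max/0]_(y <- iota 0 (N d.-1)) (C d.-1 q y.+1 - C d.-1 q y).
apply: le_trans (le_bigmax_seq 0 p xpredT gaps p_in isT).
by apply: (le_bigmax_seq 0 x xpredT (fun y => C d.-1 p y.+1 - C d.-1 p y)); rewrite ?mem_iota.
Qed.

Section HierarchicalSearch.

Variables (R : realType) (N : nat -> nat) (C : nat -> seq nat -> nat -> R).
Variable Q : R.

Local Notation state := (hsp_state N C Q).
Local Notation prefix k := (state k).1.
Local Notation remainder k := (state k).2.
Local Notation digit k := (lastle (C k (prefix k)) (N k) (remainder k)).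

Lemma hsp_stateS k :
  state k.+1 = (rcons (prefix k) (digit k), remainder k - C k (prefix k) (digit k)).
Proof. by rewrite /=; case: (state k). Qed.

Lemma size_hsp_prefix k : size (prefix k) = k.
Proof. by elim: k => [|k IHk] //; rewrite hsp_stateS size_rcons IHk. Qed.

Lemma take_hsp_prefix m k : (m <= k)%N -> take m (prefix k) = prefix m.
Proof.
elim: k => [|k IHk]; first by rewrite leqn0 => /eqP->.
rewrite leq_eqVlt => /orP[/eqP-> | lt_mk]; first by rewrite -{1}(size_hsp_prefix k.+1) take_size.
by rewrite hsp_stateS -cats1 takel_cat ?size_hsp_prefix // IHk.
Qed.

Lemma nth_hsp_prefix m k : (m < k)%N -> nth 0%N (prefix k) m = digit m.
Proof.
move=> lt_mk; rewrite -(nth_take _ (ltnSn m)) take_hsp_prefix //.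
by rewrite hsp_stateS nth_rcons size_hsp_prefix ltnn eqxx.
Qed.

Lemma hsp_spent k :
  Q - remainder k = \sum_(m < k) C m (prefix m) (digit m).
Proof.
elim: k => [|k IHk]; first by rewrite big_ord0 subrr.
by rewrite big_ord_recr -IHk hsp_stateS /=; lra.
Qed.

Lemma total_cost_hsp d : total_cost C d (hsp N C Q d) = Q - remainder d.
Proof.
rewrite hsp_spent; apply: eq_bigr => m _.
by rewrite take_hsp_prefix ?nth_hsp_prefix // ltnW.
Qed.

Variable d : nat.
Hypothesis C_at0 : forall m p, (m < d)%N -> size p = m -> valid_prefix N p ->
  C m p 0%N = 0.

Lemma hsp_step k : (k < d)%N -> valid_prefix N (prefix k) ->
  0 <= remainder k < C k (prefix k) (N k) ->
  [/\ (digit k < N k)%N, 0 <= remainder k.+1 &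
      remainder k.+1 < C k (prefix k) (digit k).+1 - C k (prefix k) (digit k)].
Proof.
move=> lt_kd valid_k /andP[ge0_r lt_r].
have [|lt_x le_Cx lt_Cx1] := lastleP _ lt_r.
  by rewrite C_at0 ?size_hsp_prefix.
by rewrite hsp_stateS /=; split => //; lra.
Qed.

Hypothesis C_consistent : forall m p x, (m.+1 < d)%N -> size p = m ->
  valid_prefix N p -> (x < N m)%N ->
  C m p x.+1 = C m p x + C m.+1 (rcons p x) (N m.+1).
Hypotheses (Q_ge0 : 0 <= Q) (Q_lt : Q < C 0%N [::] (N 0%N)).

Lemma hsp_invariant k : (k < d)%N ->
  [/\ valid_prefix N (prefix k) & 0 <= remainder k < C k (prefix k) (N k)].
Proof.
elim: k => [|k IHk] lt_kd; first by split; [case | apply/andP].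
have [valid_k bounds_k] := IHk (ltnW lt_kd).
have [lt_x ge0_r lt_r] := hsp_step (ltnW lt_kd) valid_k bounds_k.
split; first by rewrite hsp_stateS; apply: valid_prefix_rcons; rewrite ?size_hsp_prefix.
have -> : prefix k.+1 = rcons (prefix k) (digit k) by rewrite hsp_stateS.
rewrite ge0_r /=; move: lt_r; rewrite C_consistent ?size_hsp_prefix //; lra.
Qed.

End HierarchicalSearch.

Theorem theorem1 (R : realType) (d : nat) (N : nat -> nat)
    (C : nat -> seq nat -> nat -> R) (Q : R) :
  (0 < d)%N ->
  (forall k, (k < d)%N -> (0 < N k)%N) ->
  (forall m p x, (m < d)%N -> size p = m -> valid_prefix N p ->
     (x <= N m)%N -> 0 <= C m p x) ->
  (forall m p, (m < d)%N -> size p = m -> valid_prefix N p -> C m p 0%N = 0) ->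
  (forall m p x, (m < d)%N -> size p = m -> valid_prefix N p ->
     (x < N m)%N -> C m p x <= C m p x.+1) ->
  (forall m p x, (m.+1 < d)%N -> size p = m -> valid_prefix N p ->
     (x < N m)%N ->
     C m p x.+1 = C m p x + C m.+1 (rcons p x) (N m.+1)) ->
  0 <= Q -> Q < C 0%N [::] (N 0%N) ->
  0 <= Q - total_cost C d (hsp N C Q d) /\
  Q - total_cost C d (hsp N C Q d) < Delta_last N C d.
Proof.
move=> d_gt0 _ _ C_at0 _ C_consistent Q_ge0 Q_lt.
rewrite total_cost_hsp opprB addrC subrK.
have lt_last : (d.-1 < d)%N by rewrite prednK.
have [valid_last bounds_last] := hsp_invariant C_at0 C_consistent Q_ge0 Q_lt lt_last.
have [lt_x ge0_r lt_r] := hsp_step C_at0 lt_last valid_last bounds_last.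
rewrite prednK // in ge0_r lt_r; split => //.
by apply: (lt_le_trans lt_r); rewrite le_Delta_last ?size_hsp_prefix.
Qed.
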